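(* For every rooted tree $T_r$, the vertex set of $T_r$ contains two disjoint homometric sets, each of size at least $f(T_r)$.
   Context: For a tree $T_r$ rooted at $r$, let $h(T_r)$ be the number of vertices on a longest path in $T_r$ starting at $r$ (so a single vertex has $h=1$); the empty tree $T_\emptyset$ has $h(T_\emptyset)=0$ and $f(T_\emptyset)=0$. For a vertex $v$, $T_v$ denotes the subtree rooted at $v$ consisting of $v$ and its descendants. The function $f$ is defined recursively: if $|V(T_r)|\le 1$ then $f(T_r)=0$; otherwise let the children of $r$ be $v_1,\dots,v_k$ ordered so that $h(T_{v_1})\ge h(T_{v_2})\ge\dots\ge h(T_{v_k})$, where, if the number of children is odd, an extra empty tree $T_{v_k}=T_\emptyset$ is appended so that $k$ is even; then $$f(T_r)=\max\Big\{\sum_{i=1}^{k} f(T_{v_i}),\ \sum_{i=1}^{k/2} h(T_{v_{2i}})\Big\}.$$ The profile of a vertex set is the multiset of pairwise distances (in the tree) between its distinct vertices; two disjoint vertex sets are homometric if their profiles are equal, and the size of the pair is the common cardinality. *)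

From mathcomp Require Import all_boot.
Set Implicit Arguments. Unset Strict Implicit. Unset Printing Implicit Defensive.

Inductive tree : Type := Node of seq tree.

(* h(T_r): number of vertices on a longest path starting at the root. *)
Fixpoint height (t : tree) : nat :=
  let: Node cs := t in (foldr maxn 0 (map height cs)).+1.

(* Given the heights of the children sorted nonincreasingly, padded with 0 (the
   empty tree) to even length k, sum of h(T_{v_{2i}}) for i = 1..k/2, i.e. the
   entries at 0-based positions 1,3,5,... *)
Definition even_pos_sum (hs : seq nat) : nat :=
  sumn [seq nth 0 hs (2 * i).+1 | i <- iota 0 (size hs).+1./2].

Fixpoint f (t : tree) : nat :=
  let: Node cs := t in
  if cs is [::] then 0 else
  maxn (sumn (map f cs)) (even_pos_sum (sort geq (map height cs))).

(* Vertices are addressed by the sequence of child indices from the root. *)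
Fixpoint is_vertex (t : tree) (a : seq nat) : bool :=
  match a with
  | [::] => true
  | i :: a' => let: Node cs := t in (i < size cs) && is_vertex (nth (Node [::]) cs i) a'
  end.

(* length of the longest common prefix of two addresses = depth of the LCA *)
Fixpoint lcp (a b : seq nat) : nat :=
  match a, b with
  | i :: a', j :: b' => if i == j then (lcp a' b').+1 else 0
  | _, _ => 0
  end.

(* Tree distance: number of edges of the unique path a -> lca -> b. *)
Definition tdist (a b : seq nat) : nat := size a + size b - 2 * lcp a b.

(* Profile of a vertex list (duplicate-free): the multiset (as a list, compared
   up to permutation) of the distances over all unordered pairs of distinct
   elements. *)
Definition profile (A : seq (seq nat)) : seq nat :=
  [seq tdist (nth [::] A i) (nth [::] A j)
     | i <- iota 0 (size A), j <- iota i.+1 (size A - i.+1)].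

Definition homometric (A B : seq (seq nat)) : Prop :=
  size A = size B /\ perm_eq (profile A) (profile B).

From mathcomp Require Import all_boot zify.
Set Implicit Arguments. Unset Strict Implicit. Unset Printing Implicit Defensive.

(* Strengthen the invariant: the two homometric sets also have the same
   multiset of depths.  Vertices below two different children of the root are
   at distance (depth + depth), so equidepth homometric pairs living below
   pairwise distinct children can be concatenated.  The first term of f comes
   from concatenating the pairs found in all the children; the second from
   matching the children v_{2i-1}, v_{2i} (sorted by height) and taking below
   each of them the first h(T_{v_{2i}}) vertices of a longest descending path:
   two such paths are isometric, with the same depths. *)

Notation leaf := (Node [::]).

Lemma tree_ind_nth (P : tree -> Prop) :
  (forall cs, (forall k, k < size cs -> P (nth leaf cs k)) -> P (Node cs)) ->
  forall t, P t.
Proof.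
move=> IH; fix rec 1 => - [cs]; apply: IH.
elim: cs => [|c cs IHcs] [|k] Hk;
  [case: (notF Hk) | case: (notF Hk) | exact: rec | exact: IHcs].
Qed.

Fixpoint pairs_map {T : Type} (F : T -> T -> nat) (s : seq T) : seq nat :=
  if s is x :: s' then map (F x) s' ++ pairs_map F s' else [::].

Lemma profileE A : profile A = pairs_map tdist A.
Proof.
elim: A => [|x A IH] //=; rewrite -IH /profile /= subn1 -(addn0 1) !iotaDl.
congr (_ ++ _).
  by rewrite -map_comp -[in RHS](mkseq_nth [::] A) /mkseq -map_comp.
rewrite allpairs_mapl; congr flatten; apply: eq_map => i /=.
by rewrite subSS -[i.+2]/(1 + i.+1) iotaDl -map_comp.
Qed.

Lemma pairs_map_cat {T : Type} (F : T -> T -> nat) X Y :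
  perm_eq (pairs_map F (X ++ Y))
          (pairs_map F X ++ pairs_map F Y ++ [seq F x y | x <- X, y <- Y]).
Proof.
elim: X => [|x X IH] /=; first by rewrite cats0.
rewrite map_cat -!catA perm_cat2l; apply: perm_trans (perm_cat (perm_refl _) IH) _.
by rewrite perm_catCA perm_cat2l perm_catCA.
Qed.

Lemma pairs_map_map {T U : Type} (F : U -> U -> nat) (g : T -> U) s :
  pairs_map F (map g s) = pairs_map (fun x y => F (g x) (g y)) s.
Proof. by elim: s => //= x s ->; rewrite -map_comp. Qed.

Lemma eq_in_pairs_map {T : eqType} (F G : T -> T -> nat) s :
  {in s &, F =2 G} -> pairs_map F s = pairs_map G s.
Proof.
elim: s => //= x s IH FG; rewrite IH => [|a b a_s b_s]; last first.
  by rewrite FG // inE ?a_s ?b_s orbT.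
by congr (_ ++ _); apply/eq_in_map => y y_s; rewrite FG // inE ?eqxx ?y_s ?orbT.
Qed.

Lemma tdist_cons i a b : tdist (i :: a) (i :: b) = tdist a b.
Proof. by rewrite /tdist /= eqxx mulnS !addSn addnS subSS. Qed.

Lemma lcp_take d j l :
  j <= size d -> l <= size d -> lcp (take j d) (take l d) = minn j l.
Proof.
elim: d j l => [|x d IH] [|j] [|l] //=; rewrite ?minn0 ?min0n // eqxx => Hj Hl.
by rewrite IH // minnSS.
Qed.

Lemma tdist_take d j l : j <= size d -> l <= size d ->
  tdist (take j d) (take l d) = j + l - 2 * minn j l.
Proof. by move=> Hj Hl; rewrite /tdist !size_takel ?lcp_take. Qed.

Lemma is_vertex_take t a j : is_vertex t a -> is_vertex t (take j a).
Proof. by elim: a t j => [|x a IH] [cs] [|j] //= /andP[-> /IH ->]. Qed.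

Definition head_in (l : seq nat) (x : seq nat) : bool :=
  if x is i :: _ then i \in l else false.

Lemma head_in_cat_l l1 l2 x : head_in l1 x -> head_in (l1 ++ l2) x.
Proof. by case: x => //= i a; rewrite mem_cat => ->. Qed.

Lemma head_in_cat_r l1 l2 x : head_in l2 x -> head_in (l1 ++ l2) x.
Proof. by case: x => //= i a; rewrite mem_cat orbC => ->. Qed.

Definition equidepth_homometric (A B : seq (seq nat)) : Prop :=
  [/\ uniq A, uniq B, ~~ has (mem B) A,
      perm_eq (pairs_map tdist A) (pairs_map tdist B)
    & perm_eq (map size A) (map size B)].

Section DisjointBranches.

Variables l1 l2 : seq nat.
Hypothesis l12 : ~~ has (mem l2) l1.

Lemma tdist_apart x y : head_in l1 x -> head_in l2 y -> tdist x y = size x + size y.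
Proof.
case: x => [|i a] //; case: y => [|j b] //= i_l1 j_l2.
rewrite /tdist /=; case: eqP => [ij|_]; last by rewrite muln0 subn0.
by move: (hasPn l12 i i_l1); rewrite /= ij j_l2.
Qed.

Lemma apart_neq x y : head_in l1 x -> head_in l2 y -> x != y.
Proof.
case: x => [|i a] //; case: y => [|j b] //= i_l1 j_l2.
by apply/eqP => -[ij _]; move: (hasPn l12 i i_l1); rewrite /= ij j_l2.
Qed.

Lemma apart_disjoint X Y :
  all (head_in l1) X -> all (head_in l2) Y -> ~~ has (mem Y) X.
Proof.
move=> /allP X_l1 /allP Y_l2; apply/hasPn => x x_X; apply/negP => x_Y.
by move: (apart_neq (X_l1 x x_X) (Y_l2 x x_Y)); rewrite eqxx.
Qed.

Lemma apart_cross X Y : all (head_in l1) X -> all (head_in l2) Y ->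
  [seq tdist x y | x <- X, y <- Y] = [seq a + b | a <- map size X, b <- map size Y].
Proof.
move=> /allP X_l1 /allP Y_l2; rewrite allpairs_mapl allpairs_mapr.
congr flatten; apply/eq_in_map => x x_X; apply/eq_in_map => y y_Y.
exact: tdist_apart (X_l1 x x_X) (Y_l2 y y_Y).
Qed.

Lemma equidepth_homometric_cat A1 B1 A2 B2 :
  all (head_in l1) (A1 ++ B1) -> all (head_in l2) (A2 ++ B2) ->
  equidepth_homometric A1 B1 -> equidepth_homometric A2 B2 ->
  equidepth_homometric (A1 ++ A2) (B1 ++ B2).
Proof.
rewrite !all_cat => /andP[A1_l1 B1_l1] /andP[A2_l2 B2_l2].
case=> uA1 uB1 AB1 dA1B1 sA1B1 [uA2 uB2 AB2 dA2B2 sA2B2]; split.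
- by rewrite cat_uniq uA1 uA2 has_sym apart_disjoint.
- by rewrite cat_uniq uB1 uB2 has_sym apart_disjoint.
- rewrite has_cat !(has_sym (B1 ++ B2)) !has_cat (has_sym A1 B1) (has_sym A2 B2).
  rewrite (negbTE AB1) (negbTE AB2) (has_sym A1 B2) orbF /= negb_or.
  by apply/andP; split; apply: apart_disjoint.
- apply: perm_trans (pairs_map_cat _ _ _) _; rewrite perm_sym.
  apply: perm_trans (pairs_map_cat _ _ _) _; rewrite perm_sym.
  rewrite (apart_cross A1_l1 A2_l2) (apart_cross B1_l1 B2_l2).
  exact/(perm_cat dA1B1)/(perm_cat dA2B2)/perm_allpairs.
- by rewrite !map_cat; apply: perm_cat.
Qed.

End DisjointBranches.

Lemma pairs_map_tdist_cons i A :
  pairs_map tdist (map (cons i) A) = pairs_map tdist A.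
Proof.
by rewrite pairs_map_map; apply: eq_in_pairs_map => x y _ _; exact: (tdist_cons i x y).
Qed.

Lemma equidepth_homometric_cons i A B :
  equidepth_homometric A B ->
  equidepth_homometric (map (cons i) A) (map (cons i) B).
Proof.
have cons_inj : injective (cons i) by move=> x y [].
case=> uA uB AB dAB sAB; split.
- by rewrite map_inj_uniq.
- by rewrite map_inj_uniq.
- by rewrite has_map; apply/hasPn => x x_A /=; rewrite mem_map // (hasPn AB x x_A).
- by rewrite !pairs_map_tdist_cons.
- have size_cons X : map size (map (cons i) X) = map succn (map size X).
    by rewrite -!map_comp.
  by rewrite !size_cons perm_map.
Qed.

Lemma all_catACA {T : Type} (p : pred T) (s1 s2 s3 s4 : seq T) :
  all p ((s1 ++ s2) ++ (s3 ++ s4)) = all p ((s1 ++ s3) ++ (s2 ++ s4)).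
Proof. by rewrite !all_cat andbACA. Qed.

Definition homometric_in (t : tree) (P : pred (seq nat)) (n : nat) : Prop :=
  exists A B, [/\ equidepth_homometric A B, all P (A ++ B),
                  all (is_vertex t) (A ++ B) & n <= size A].

Lemma homometric_in0 t P : homometric_in t P 0.
Proof. by exists [::], [::]. Qed.

Lemma homometric_in_weaken t (P Q : pred (seq nat)) m n :
  subpred P Q -> m <= n -> homometric_in t P n -> homometric_in t Q m.
Proof.
move=> PQ mn [A [B [hAB PAB vAB nA]]]; exists A, B.
by split; [|exact: sub_all PAB|exact: vAB|exact: leq_trans nA].
Qed.

Lemma homometric_in_max t P m n :
  homometric_in t P m -> homometric_in t P n -> homometric_in t P (maxn m n).
Proof. by move=> Pm Pn; case: leqP. Qed.

Lemma homometric_in_child cs k n : k < size cs ->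
  homometric_in (nth leaf cs k) predT n -> homometric_in (Node cs) (head_in [:: k]) n.
Proof.
move=> k_cs [A [B [hAB _ vAB nA]]].
exists (map (cons k) A), (map (cons k) B); split.
- exact: equidepth_homometric_cons.
- by rewrite -map_cat all_map; apply/allP => x _ /=; rewrite inE.
- by rewrite -map_cat all_map; apply/allP => x /(allP vAB) /=; rewrite k_cs.
- by rewrite size_map.
Qed.

Lemma homometric_in_cat cs l1 l2 n1 n2 : ~~ has (mem l2) l1 ->
  homometric_in (Node cs) (head_in l1) n1 ->
  homometric_in (Node cs) (head_in l2) n2 ->
  homometric_in (Node cs) (head_in (l1 ++ l2)) (n1 + n2).
Proof.
move=> l12 [A1 [B1 [h1 P1 v1 n1A]]] [A2 [B2 [h2 P2 v2 n2A]]].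
exists (A1 ++ A2), (B1 ++ B2); split.
- exact: (equidepth_homometric_cat l12 P1 P2 h1 h2).
- rewrite all_catACA all_cat.
  by rewrite (sub_all (@head_in_cat_l l1 l2) P1) (sub_all (@head_in_cat_r l1 l2) P2).
- by rewrite all_catACA all_cat v1 v2.
- by rewrite size_cat leq_add.
Qed.

Lemma seq_ind2 {T : Type} (P : seq T -> Prop) :
  P [::] -> (forall x, P [:: x]) -> (forall x y s, P s -> P [:: x, y & s]) ->
  forall s, P s.
Proof.
move=> P0 P1 P2 s; suff: P s /\ forall x, P (x :: s) by case.
elim: s => [|y s [Ps Pys]]; first by split=> // x; exact: P1.
by split=> [|x]; [exact: Pys | exact: P2].
Qed.

Lemma exists_nth_max (s : seq nat) :
  s != [::] -> exists2 k, k < size s & nth 0 s k = foldr maxn 0 s.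
Proof.
elim: s => [|x s IH] // _; case: s IH => [|y s] IH.
  by exists 0; rewrite //= maxn0.
case: IH => // k k_s nth_k; case: (leqP (foldr maxn 0 (y :: s)) x) => [x_max|max_x].
  by exists 0; rewrite //= (maxn_idPl x_max).
by exists k.+1; rewrite //= nth_k (maxn_idPr (ltnW max_x)).
Qed.

Lemma height_gt0 t : 0 < height t.
Proof. by case: t. Qed.

Lemma exists_longest_path t : exists2 d, size d = (height t).-1 & is_vertex t d.
Proof.
elim/tree_ind_nth: t => cs IH.
have [cs_nil|cs_ne] := altP (map height cs =P [::]).
  by exists [::]; case: cs IH cs_nil.
case: (exists_nth_max cs_ne) => k; rewrite size_map => k_cs.
rewrite (nth_map leaf) // => max_k.
case: (IH k k_cs) => d size_d vertex_d; exists (k :: d); last by rewrite /= k_cs.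
by rewrite /= size_d -max_k prednK ?height_gt0.
Qed.

Definition descending_path (p : nat) (d : seq nat) (m : nat) : seq (seq nat) :=
  [seq p :: take j d | j <- iota 0 m].

Lemma descending_path_head p d m : all (head_in [:: p]) (descending_path p d m).
Proof. by rewrite all_map; apply/allP => j _ /=; rewrite inE. Qed.

Lemma descending_path_vertex cs p d m : p < size cs -> is_vertex (nth leaf cs p) d ->
  all (is_vertex (Node cs)) (descending_path p d m).
Proof.
by move=> p_cs d_v; rewrite all_map; apply/allP => j _ /=; rewrite p_cs is_vertex_take.
Qed.

Section DescendingPath.

Variables (p : nat) (d : seq nat) (m : nat).
Hypothesis m_d : m <= (size d).+1.

Lemma descending_path_pairs :
  pairs_map tdist (descending_path p d m)
  = pairs_map (fun j l => j + l - 2 * minn j l) (iota 0 m).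
Proof.
rewrite pairs_map_map; apply: eq_in_pairs_map => j l; rewrite !mem_iota => j_m l_m.
by rewrite tdist_cons tdist_take //; lia.
Qed.

Lemma descending_path_sizes : map size (descending_path p d m) = map succn (iota 0 m).
Proof.
rewrite -map_comp; apply/eq_in_map => j; rewrite mem_iota => j_m /=.
by rewrite size_takel //; lia.
Qed.

Lemma descending_path_uniq : uniq (descending_path p d m).
Proof.
apply: (@map_uniq _ _ size).
by rewrite descending_path_sizes (map_inj_uniq succn_inj) iota_uniq.
Qed.

End DescendingPath.

Lemma equidepth_homometric_paths p q dp dq m : p != q ->
  m <= (size dp).+1 -> m <= (size dq).+1 ->
  equidepth_homometric (descending_path p dp m) (descending_path q dq m).
Proof.
move=> pq m_dp m_dq; split; rewrite ?descending_path_uniq //.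
- apply: (@apart_disjoint [:: p] [:: q]); rewrite ?descending_path_head //=.
  by rewrite orbF inE.
- by rewrite !descending_path_pairs.
- by rewrite !descending_path_sizes.
Qed.

Definition child_height (cs : seq tree) (k : nat) : nat := height (nth leaf cs k).

Lemma homometric_in_paths cs p q : p != q -> p < size cs -> q < size cs ->
  child_height cs q <= child_height cs p ->
  homometric_in (Node cs) (head_in [:: p; q]) (child_height cs q).
Proof.
move=> pq p_cs q_cs hq_hp; set m := child_height cs q.
have [dp size_dp dp_v] := exists_longest_path (nth leaf cs p).
have [dq size_dq dq_v] := exists_longest_path (nth leaf cs q).
have m_dp : m <= (size dp).+1 by rewrite size_dp prednK ?height_gt0.
have m_dq : m <= (size dq).+1 by rewrite size_dq prednK ?height_gt0.
exists (descending_path p dp m), (descending_path q dq m); split.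
- exact: equidepth_homometric_paths.
- rewrite all_cat (sub_all (@head_in_cat_l [:: p] [:: q]) (descending_path_head _ _ _)).
  by rewrite (sub_all (@head_in_cat_r [:: p] [:: q]) (descending_path_head _ _ _)).
- by rewrite all_cat !descending_path_vertex.
- by rewrite size_map size_iota.
Qed.

Lemma homometric_in_sum cs (l : seq nat) :
  (forall k, k < size cs -> homometric_in (nth leaf cs k) predT (f (nth leaf cs k))) ->
  uniq l -> all (fun k => k < size cs) l ->
  homometric_in (Node cs) (head_in l) (sumn [seq f (nth leaf cs k) | k <- l]).
Proof.
move=> IH; elim: l => [|k l IHl] /=; first by move=> *; exact: homometric_in0.
case/andP => k_l l_uniq /andP[k_cs l_cs].
apply: (@homometric_in_cat _ [:: k]); first by rewrite /= orbF.
  exact: homometric_in_child (IH k k_cs).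
exact: IHl.
Qed.

Fixpoint even_pos_sum_rec (s : seq nat) : nat :=
  if s is _ :: b :: r then b + even_pos_sum_rec r else 0.

Lemma even_pos_sumE s : even_pos_sum s = even_pos_sum_rec s.
Proof.
elim/(@seq_ind2 nat): s => [|a|a b s IHs] //; rewrite /= -IHs /even_pos_sum /=.
rewrite -(addn0 1) iotaDl /= -map_comp; congr (_ + sumn _); apply: eq_map => i /=.
by congr nth; lia.
Qed.

Lemma homometric_in_pairs cs (l : seq nat) :
  uniq l -> all (fun k => k < size cs) l ->
  sorted (fun i j => child_height cs j <= child_height cs i) l ->
  homometric_in (Node cs) (head_in l) (even_pos_sum_rec (map (child_height cs) l)).
Proof.
elim/(@seq_ind2 nat): l => [|p|p q l IHl] /=; try by move=> *; exact: homometric_in0.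
rewrite !inE negb_or -!andbA => /and4P[pq p_l q_l l_uniq] /and3P[p_cs q_cs l_cs].
case/andP => hq_hp /path_sorted l_sorted.
apply: (@homometric_in_cat _ [:: p; q]); first by rewrite /= (negbTE p_l) (negbTE q_l).
  exact: homometric_in_paths.
exact: IHl.
Qed.

Lemma f_Node_le cs :
  f (Node cs) <= maxn (sumn (map f cs)) (even_pos_sum_rec (sort geq (map height cs))).
Proof. by case: cs => //= c cs; rewrite even_pos_sumE. Qed.

Lemma homometric_in_f t : homometric_in t predT (f t).
Proof.
elim/tree_ind_nth: t => cs IH.
set idx := sort (relpre (child_height cs) geq) (iota 0 (size cs)).
have iota_cs : all (fun k => k < size cs) (iota 0 (size cs)).
  by apply/allP => k; rewrite mem_iota.
have heights_idx : map (child_height cs) idx = sort geq (map height cs).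
  by rewrite /idx -sort_map -[in RHS](mkseq_nth leaf cs) /mkseq -map_comp.
apply: homometric_in_weaken (f_Node_le cs) _ => //; apply: homometric_in_max.
- apply: homometric_in_weaken (homometric_in_sum IH (iota_uniq 0 _) iota_cs) => //.
  by rewrite -[in leqLHS](mkseq_nth leaf cs) /mkseq -map_comp.
- rewrite -heights_idx; apply: homometric_in_weaken (homometric_in_pairs _ _ _) => //.
  + by rewrite sort_uniq iota_uniq.
  + by rewrite all_sort.
  + by apply: sort_sorted => i j; exact: leq_total.
Qed.

Theorem lemma1 (T : tree) :
  exists A B : seq (seq nat),
    uniq A /\ uniq B /\ all (is_vertex T) A /\ all (is_vertex T) B /\
    ~~ has (mem B) A /\ homometric A B /\ f T <= size A.
Proof.
have [A [B [[uA uB AB dAB sAB] _ AB_v fA]]] := homometric_in_f T.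
move: AB_v; rewrite all_cat => /andP[A_v B_v].
exists A, B; do 5!split => //; split => //; split; last by rewrite !profileE.
by rewrite -(size_map size A) (perm_size sAB) size_map.
Qed.
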